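(* Let $A_1,\dots,A_m\in\mathbb{C}^{n\times n}$ be Hermitian matrices and fix $t\ge1$. (a) The map sending an ordered $*$-simultaneous block decomposition $(V_1,\dots,V_t)$ of $A_1,\dots,A_m$ to $(\epsilon_1,\dots,\epsilon_t)$, with $\epsilon_j$ the projection of $\mathbb{C}^n$ onto $V_j$ along $\bigoplus_{l\ne j}V_l$, is a bijection onto the set of ordered complete sets of $t$ orthogonal idempotents of $Z(A_1,\dots,A_m)$. In particular, there exist $P\in\mathrm{GL}_n(\mathbb{C})$ and positive integers $n_1,\dots,n_t$ summing to $n$ such that each $P^*A_iP$ is block diagonal with blocks of sizes $n_1,\dots,n_t$ if and only if $Z(A_1,\dots,A_m)$ contains a complete set of $t$ orthogonal idempotents. (b) Restricting (a) to decompositions whose subspaces $V_j$ are pairwise orthogonal for the standard Hermitian inner product, the same map (now $\epsilon_j$ is the orthogonal projection onto $V_j$) is a bijection onto the ordered complete sets of $t$ orthogonal idempotents of $Z(A_1,\dots,A_m)$ consisting of Hermitian matrices; in particular a unitary $U$ with every $U^*A_iU$ block diagonal with $t$ blocks exists if and only if $Z(A_1,\dots,A_m)$ contains a complete set of $t$ orthogonal idempotents that are Hermitian matrices.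
   Context: For Hermitian $A_1,\dots,A_m\in\mathbb{C}^{n\times n}$, the center is $Z(A_1,\dots,A_m)=\{X\in\mathbb{C}^{n\times n} : (A_iX)^*=A_iX \text{ for all } i\}$, where $^*$ denotes conjugate transpose. An ordered $*$-simultaneous block decomposition of length $t$ is a $t$-tuple $(V_1,\dots,V_t)$ of nonzero subspaces of $\mathbb{C}^n$ with $\mathbb{C}^n=V_1\oplus\cdots\oplus V_t$ and $x^*A_iy=0$ for all $i$, all $j\neq l$, $x\in V_j$, $y\in V_l$. An ordered complete set of $t$ orthogonal idempotents of the center is a $t$-tuple of nonzero matrices $\epsilon_1,\dots,\epsilon_t\in Z(A_1,\dots,A_m)$ with $\epsilon_j^2=\epsilon_j$, $\epsilon_j\epsilon_l=0$ for $j\neq l$, and $\sum_j\epsilon_j=I_n$. *)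

From mathcomp Require Import all_boot all_algebra complex.
From mathcomp Require Import reals.
Set Implicit Arguments. Unset Strict Implicit. Unset Printing Implicit Defensive.
Import GRing.Theory Num.Theory.
Local Open Scope ring_scope.

Section Defs.
Variable R : realType.
Local Notation C := (R[i]).

Definition adjmx (p q : nat) (M : 'M[C]_(p, q)) : 'M[C]_(q, p) :=
  (map_mx Num.conj M)^T.

Definition herm_mx (n : nat) (M : 'M[C]_n) : Prop := adjmx M = M.

Definition unitary_mx (n : nat) (U : 'M[C]_n) : Prop := adjmx U *m U = 1%:M.

Definition in_center (m n : nat) (A : 'I_m -> 'M[C]_n) (X : 'M[C]_n) : Prop :=
  forall i, adjmx (A i *m X) = A i *m X.

Definition block_decomp (m n t : nat) (A : 'I_m -> 'M[C]_n)
    (V : 'I_t -> {vspace 'cV[C]_n}) : Prop :=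
  [/\ (forall j, V j != 0%VS),
      directv (\sum_(j < t) V j),
      (\sum_(j < t) V j)%VS = fullv &
      forall i j l (x y : 'cV[C]_n), j != l -> x \in V j -> y \in V l ->
        adjmx x *m A i *m y = 0].

Definition orth_family (n t : nat) (V : 'I_t -> {vspace 'cV[C]_n}) : Prop :=
  forall j l (x y : 'cV[C]_n), j != l -> x \in V j -> y \in V l ->
    adjmx x *m y = 0.

(* eps_j is the projection of C^n onto V_j along (+)_{l <> j} V_l, i.e. the
   linear map which is the identity on V_j and zero on every V_l, l <> j *)
Definition proj_family (n t : nat) (V : 'I_t -> {vspace 'cV[C]_n})
    (eps : 'I_t -> 'M[C]_n) : Prop :=
  forall j l (v : 'cV[C]_n), v \in V l -> eps j *m v = (if j == l then v else 0).

Definition orth_idem_set (m n t : nat) (A : 'I_m -> 'M[C]_n)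
    (eps : 'I_t -> 'M[C]_n) : Prop :=
  [/\ (forall j, eps j != 0),
      (forall j, in_center A (eps j)),
      (forall j, eps j *m eps j = eps j),
      (forall j l, j != l -> eps j *m eps l = 0) &
      \sum_(j < t) eps j = 1%:M].

Definition in_block (t : nat) (ns : 'I_t -> nat) (j : 'I_t) (r : nat) : bool :=
  ((\sum_(l < t | (l < j)%N) ns l <= r) && (r < \sum_(l < t | (l <= j)%N) ns l))%N.

Definition block_diag (n t : nat) (ns : 'I_t -> nat) (M : 'M[C]_n) : Prop :=
  forall r c : 'I_n, ~~ [exists j, in_block ns j r && in_block ns j c] -> M r c = 0.

End Defs.

From mathcomp Require Import all_boot all_order all_algebra complex.
From mathcomp Require Import reals.
From Stdlib Require Import FunctionalExtensionality.
Import GRing.Theory Num.Theory.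
Local Open Scope ring_scope.

Set Implicit Arguments.
Unset Strict Implicit.
Unset Printing Implicit Defensive.

(* A decomposition C^n = V_1 (+) ... (+) V_t and its family of projections eps_j
   determine each other: V_j is the image of eps_j.  For any matrix B, the V_j are
   pairwise orthogonal for the form (x, y) |-> x^* B y exactly when
   eps_j^* B = B eps_j for every j; for Hermitian B = A_i this says that A_i eps_j is
   Hermitian, i.e. that eps_j lies in the center, and for B = 1 that eps_j is
   Hermitian.  In matrix form, a congruence P^* A_i P into block diagonal form yields
   the idempotents P D_j P^-1 with D_j the diagonal block indicators; conversely,
   stacking bases of the images of the eps_j, orthonormalized by Gram-Schmidt when the
   eps_j are Hermitian, gives P. *)

Lemma mulmx_castmx (T : pzRingType) m1 m2 p q n1 n2 (e1 : m1 = m2) (e2 : n1 = n2)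
    (M : 'M[T]_(m1, p)) (B : 'M[T]_(p, q)) (N : 'M[T]_(q, n1)) :
  castmx (e1, erefl p) M *m B *m castmx (erefl q, e2) N = castmx (e1, e2) (M *m B *m N).
Proof. by case: m2 / e1; case: n2 / e2; rewrite !castmx_id. Qed.

Lemma castmx1 (T : pzRingType) n1 n2 (e : n1 = n2) :
  castmx (e, e) (1%:M : 'M[T]_n1) = 1%:M.
Proof. by case: n2 / e; rewrite castmx_id. Qed.

Lemma sum_mxrank_idem (F : fieldType) n t (e : 'I_t -> 'M[F]_n) :
  (forall j, e j *m e j = e j) -> (forall j l, j != l -> e j *m e l = 0) ->
  \sum_j e j = 1%:M -> (\sum_j \rank (e j))%N = n.
Proof.
move=> e_idem e_orth e_sum1.
have /mxdirectP/= <- : mxdirect (\sum_j e j)%MS.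
  apply/mxdirect_sumsP => j _; apply/eqP/rowV0P => v.
  rewrite sub_capmx => /andP[/submxP[x ->] /sub_sumsmxP[u xe]].
  have : x *m e j *m e j = x *m e j by rewrite -mulmxA e_idem.
  rewrite {1}xe mulmx_suml big1 => [<- //|l /andP[_ lj]].
  by rewrite -mulmxA e_orth // mulmx0.
apply/eqP; rewrite eqn_leq rank_leq_col -{1}(mxrank1 F n) mxrankS //.
by rewrite -e_sum1 summx_sub_sums.
Qed.

Section Adjoint.
Variable R : realType.
Local Notation C := R[i].

Lemma adjmxE p q (M : 'M[C]_(p, q)) : adjmx M = (M ^t* )%sesqui.
Proof. by rewrite /adjmx map_trmx. Qed.

Lemma adjmxK p q (M : 'M[C]_(p, q)) : adjmx (adjmx M) = M.
Proof. by rewrite !adjmxE trmxCK. Qed.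

Lemma adjmxM p q r (M : 'M[C]_(p, q)) (N : 'M[C]_(q, r)) :
  adjmx (M *m N) = adjmx N *m adjmx M.
Proof. by rewrite /adjmx map_mxM trmx_mul. Qed.

Lemma adjmx0 p q : adjmx (0 : 'M[C]_(p, q)) = 0.
Proof. by rewrite /adjmx map_mx0 trmx0. Qed.

Lemma adjmx1 p : adjmx (1%:M : 'M[C]_p) = 1%:M.
Proof. by rewrite /adjmx map_mx1 trmx1. Qed.

Lemma adjmx_eq0 p q (M : 'M[C]_(p, q)) : (adjmx M == 0) = (M == 0).
Proof.
by apply/eqP/eqP => [/(congr1 (@adjmx R _ _))|->]; rewrite ?adjmxK adjmx0.
Qed.

Lemma adjmx_sum p q (I : finType) (F : I -> 'M[C]_(p, q)) :
  adjmx (\sum_i F i) = \sum_i adjmx (F i).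
Proof. by rewrite /adjmx map_mx_sum raddf_sum. Qed.

Lemma adjmx_castmx p1 q1 p2 q2 (e : (p1 = p2) * (q1 = q2)) (M : 'M[C]_(p1, q1)) :
  adjmx (castmx e M) = castmx (e.2, e.1) (adjmx M).
Proof. by case: e => e1 e2; case: p2 / e1; case: q2 / e2; rewrite !castmx_id. Qed.

Lemma adjmx_mxcol p (ps : 'I_p -> nat) q (S : forall j, 'M[C]_(ps j, q)) :
  adjmx (\mxcol_j S j) = \mxrow_j adjmx (S j).
Proof. by apply/matrixP => i j; rewrite !mxE. Qed.

Lemma adjmx_unit n (M : 'M[C]_n) : M \in unitmx -> adjmx M \in unitmx.
Proof.
move=> M_unit; have : adjmx M *m adjmx (invmx M) = 1%:M.
  by rewrite -adjmxM mulVmx // adjmx1.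
by case/mulmx1_unit.
Qed.

Lemma herm_congr n (P M : 'M[C]_n) :
  herm_mx M -> herm_mx (adjmx P *m M *m P).
Proof. by move=> hM; rewrite /herm_mx !adjmxM adjmxK hM mulmxA. Qed.

Lemma form_eq0 p (M : 'M[C]_p) :
  (forall x y : 'cV[C]_p, adjmx x *m M *m y = 0) -> M = 0.
Proof.
move=> h; apply/matrixP => r c.
have := congr1 (fun N : 'M[C]_1 => N 0 0) (h (delta_mx r 0) (delta_mx c 0)).
have -> : adjmx (delta_mx r 0 : 'cV[C]_p) = delta_mx 0 r.
  by apply/matrixP => i j; rewrite !mxE; case: eqP; case: eqP; rewrite ?conjC0 ?conjC1.
by rewrite -rowE -colE !mxE.
Qed.

End Adjoint.

Section LinearMatrix.
Variables (R : realType) (n : nat).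
Local Notation C := R[i].

Definition lfun_mx (f : 'End('cV[C]_n)) : 'M[C]_n := \matrix_(r, c) f (delta_mx c 0) r 0.

Lemma mul_lfun_mx f v : lfun_mx f *m v = f v.
Proof.
rewrite (matrix_sum_delta v) (eq_bigr _ (fun _ _ => big_ord1 _ _)).
rewrite mulmx_sumr linear_sum.
apply: eq_bigr => c _; rewrite !linearZ /=; congr (_ *: _).
by apply/matrixP => r k; rewrite [k]ord1 -colE !mxE.
Qed.

End LinearMatrix.

Section ProjectionFamily.
Variables (R : realType) (n t : nat).
Local Notation C := R[i].
Variable V : 'I_t -> {vspace 'cV[C]_n}.
Hypothesis sumV : (\sum_(j < t) V j)%VS = fullv.
Implicit Types (eps : 'I_t -> 'M[C]_n) (B E : 'M[C]_n).

Lemma memv_sum_fullP (v : 'cV[C]_n) :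
  exists2 vs : 'I_t -> 'cV[C]_n, (forall j, vs j \in V j) & v = \sum_j vs j.
Proof.
have : v \in (\sum_(j < t) V j)%VS by rewrite sumV memvf.
by case/memv_sumP => vs Vvs ->; exists vs => // j; apply: Vvs.
Qed.

Lemma mx_eq_on_sum E (E' : 'M[C]_n) :
  (forall l v, v \in V l -> E *m v = E' *m v) -> E = E'.
Proof.
move=> eqEE'; apply/trmx_inj/row_matrixP => c; rewrite -!tr_col !colE; congr trmx.
have [vs Vvs ->] := memv_sum_fullP (delta_mx c 0).
by rewrite !mulmx_sumr; apply: eq_bigr => j _; apply: eqEE'.
Qed.

Lemma proj_family_unique eps eps' :
  proj_family V eps -> proj_family V eps' -> eps = eps'.
Proof.
move=> peps peps'; apply: functional_extensionality => j.
by apply: mx_eq_on_sum => l v Vv; rewrite (peps _ _ _ Vv) (peps' _ _ _ Vv).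
Qed.

Lemma proj_family_exists : directv (\sum_(j < t) V j) -> exists eps, proj_family V eps.
Proof.
move=> /directv_sum_unique dxV.
pose pi j := sumv_pi (\sum_(j < t) V j)%VS j.
exists (fun j => lfun_mx (pi j)) => j l v Vv; rewrite mul_lfun_mx.
have Vpi k : true -> pi k v \in V k by move=> _; apply: memv_sum_pi.
have Vdelta k : true -> (if k == l then v else 0) \in V k.
  by move=> _; case: eqP => [->|_]; rewrite ?mem0v.
move: (dxV _ _ Vpi Vdelta); rewrite sumv_pi_sum ?sumV ?memvf //.
rewrite -big_mkcond big_pred1_eq eqxx => /esym/forall_inP/(_ j isT)/eqP ->.
by rewrite eq_sym.
Qed.

Definition form_orth (B : 'M[C]_n) (W : 'I_t -> {vspace 'cV[C]_n}) :=
  forall j l (x y : 'cV[C]_n), j != l -> x \in W j -> y \in W l -> adjmx x *m B *m y = 0.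

Section Projections.
Variable eps : 'I_t -> 'M[C]_n.
Hypothesis peps : proj_family V eps.

Lemma proj_family_fix j v : v \in V j -> eps j *m v = v.
Proof. by move=> Vv; rewrite (peps _ Vv) eqxx. Qed.

Lemma proj_family_sum j (vs : 'I_t -> 'cV[C]_n) :
  (forall l, vs l \in V l) -> eps j *m \sum_l vs l = vs j.
Proof.
move=> Vvs; rewrite mulmx_sumr (bigD1 j) //= proj_family_fix // big1 ?addr0 //.
by move=> l /negPf lj; rewrite (peps _ (Vvs l)) eq_sym lj.
Qed.

Lemma proj_family_mem j v : eps j *m v \in V j.
Proof. by have [vs Vvs ->] := memv_sum_fullP v; rewrite proj_family_sum. Qed.

Lemma proj_family_idem j : eps j *m eps j = eps j.
Proof. by apply: mx_eq_on_sum => l v _; rewrite -mulmxA proj_family_fix ?proj_family_mem. Qed.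

Lemma proj_family_orth j l : j != l -> eps j *m eps l = 0.
Proof.
move=> /negPf jl; apply: mx_eq_on_sum => k v _.
by rewrite -mulmxA (peps _ (proj_family_mem l v)) jl mul0mx.
Qed.

Lemma proj_family_sum1 : \sum_j eps j = 1%:M.
Proof.
apply: mx_eq_on_sum => l v _; have [vs Vvs ->] := memv_sum_fullP v.
by rewrite mulmx_suml mul1mx; apply: eq_bigr => j _; apply: proj_family_sum.
Qed.

Lemma proj_family_neq0 j : V j != 0%VS -> eps j != 0.
Proof.
move=> Vj0; apply: contraNneq Vj0 => eps0; rewrite -vpick0.
by rewrite -(proj_family_fix (memv_pick (V j))) eps0 mul0mx.
Qed.

Lemma form_orthE B : form_orth B V <-> forall j, adjmx (eps j) *m B = B *m eps j.
Proof.
split=> [orthB j | epsB j l x y jl Vx Vy].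
  (* Both sides equal eps_j^* B eps_j, since the cross terms eps_l^* B eps_k vanish. *)
  have cross l k : l != k -> adjmx (eps l) *m B *m eps k = 0.
    move=> lk; apply: form_eq0 => x y.
    rewrite !mulmxA -adjmxM -!mulmxA mulmxA.
    exact: orthB lk (proj_family_mem _ _) (proj_family_mem _ _).
  have diag k : \sum_l adjmx (eps l) *m (B *m eps k) = adjmx (eps k) *m B *m eps k.
    by rewrite (bigD1 k) //= big1 ?addr0 ?mulmxA // => l lk; rewrite mulmxA cross.
  rewrite -[LHS]mulmx1 -proj_family_sum1 mulmx_sumr (bigD1 j) //= big1 ?addr0.
    rewrite -[B *m _]mul1mx -adjmx1 -proj_family_sum1 adjmx_sum !mulmx_suml.
    by rewrite diag.
  by move=> l lj; rewrite cross // eq_sym.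
rewrite -(proj_family_fix Vx) -(proj_family_fix Vy) adjmxM -!mulmxA (mulmxA _ B) epsB.
by rewrite -mulmxA (mulmxA (eps j)) proj_family_orth // mul0mx !mulmx0.
Qed.

End Projections.

End ProjectionFamily.

Lemma proj_family_inj (R : realType) n t (V V' : 'I_t -> {vspace 'cV[R[i]]_n}) eps :
  (\sum_(j < t) V j)%VS = fullv -> (\sum_(j < t) V' j)%VS = fullv ->
  proj_family V eps -> proj_family V' eps -> V = V'.
Proof.
have sub W W' : (\sum_(j < t) W' j)%VS = fullv -> proj_family W eps ->
    proj_family W' eps -> forall j, (W j <= W' j)%VS.
  move=> sumW' pW pW' j; apply/subvP => v Wv.
  by rewrite -(proj_family_fix pW Wv) (proj_family_mem sumW' pW').
move=> sumV sumV' pV pV'; apply: functional_extensionality => j.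
by apply/eqP; rewrite eqEsubv !sub.
Qed.

Lemma orth_familyE (R : realType) n t (V : 'I_t -> {vspace 'cV[R[i]]_n}) :
  orth_family V <-> form_orth 1%:M V.
Proof.
by split=> orthV j l x y jl Vx Vy; have := orthV j l x y jl Vx Vy; rewrite mulmx1.
Qed.

Section ImageFamily.
Variables (R : realType) (n t : nat).
Local Notation C := R[i].
Variable eps : 'I_t -> 'M[C]_n.
Hypothesis eps_idem : forall j, eps j *m eps j = eps j.
Hypothesis eps_orth : forall j l, j != l -> eps j *m eps l = 0.
Hypothesis eps_sum1 : \sum_j eps j = 1%:M.

Definition image_family j : {vspace 'cV[C]_n} := limg (linfun (mulmx (eps j))).

Lemma image_familyP j (v : 'cV[C]_n) : reflect (eps j *m v = v) (v \in image_family j).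
Proof.
apply: (iffP memv_imgP) => [[u _ ->]|<-]; last by exists v; rewrite ?memvf ?lfunE.
by rewrite lfunE /= mulmxA eps_idem.
Qed.

Lemma mem_image_family j (v : 'cV[C]_n) : eps j *m v \in image_family j.
Proof. by apply/image_familyP; rewrite mulmxA eps_idem. Qed.

Lemma image_family_proj : proj_family image_family eps.
Proof.
move=> j l v /image_familyP <-; rewrite mulmxA.
by case: eqVneq => [->|/eps_orth->]; rewrite ?eps_idem ?mul0mx.
Qed.

Lemma image_family_sum : (\sum_(j < t) image_family j)%VS = fullv.
Proof.
apply/eqP; rewrite eqEsubv subvf /=; apply/subvP => v _.
apply/memv_sumP; exists (fun j => eps j *m v) => [j _|].
  exact: mem_image_family.
by rewrite -mulmx_suml eps_sum1 mul1mx.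
Qed.

Lemma image_family_direct : directv (\sum_(j < t) image_family j).
Proof.
apply/directv_sum_independent => vs Vvs vs0 j _.
have Vvs' l : vs l \in image_family l by apply: Vvs.
by rewrite -(proj_family_sum image_family_proj j Vvs') vs0 mulmx0.
Qed.

Lemma image_family_neq0 j : eps j != 0 -> image_family j != 0%VS.
Proof.
apply: contraNneq => Vj0; apply/eqP/(mx_eq_on_sum image_family_sum) => l v _.
by apply/eqP; rewrite mul0mx -memv0 -Vj0 mem_image_family.
Qed.

End ImageFamily.

Section BlockIndex.
Variables (t : nat) (ns : 'I_t -> nat).

Lemma in_block_sig1 (s : 'I_(\sum_(j < t) ns j)) j : in_block ns j s = (tagnat.sig1 s == j).
Proof.
have upper_bound (k : 'I_t) :
    (\sum_(l < t | (l <= k)%N) ns l = \sum_(l < t | (l < k)%N) ns l + ns k)%N.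
  rewrite (bigD1 k) //= addnC; congr (_ + _)%N.
  by apply: eq_bigl => l; rewrite ltn_neqAle andbC.
rewrite /in_block upper_bound; apply/idP/eqP => [/andP[lo_s s_hi]|<-].
  have lt_s : (s - \sum_(l < t | (l < j)%N) ns l < ns j)%N by rewrite ltn_subLR // addnC.
  have <- : tagnat.Rank j (Ordinal lt_s) = s.
    by apply: ord_inj; rewrite tagnat.RankEsum /= subnKC.
  by rewrite tagnat.Rank1K.
by rewrite (tagnat.rect s) leq_addr ltn_add2l /=.
Qed.

Variables (R : realType) (n : nat).
Hypothesis sum_ns : (\sum_(j < t) ns j)%N = n.

Definition block_of (r : 'I_n) : 'I_t := tagnat.sig1 (cast_ord (esym sum_ns) r).

Lemma in_block_of (r : 'I_n) j : in_block ns j r = (block_of r == j).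
Proof. by rewrite -in_block_sig1. Qed.

Lemma block_diagP (M : 'M[R[i]]_n) :
  block_diag ns M <-> forall r c, block_of r != block_of c -> M r c = 0.
Proof.
have sameP r c : reflect (block_of r = block_of c) [exists j, in_block ns j r && in_block ns j c].
  apply: (iffP existsP) => [[j]|e]; last by exists (block_of c); rewrite !in_block_of e eqxx.
  by rewrite !in_block_of => /andP[/eqP-> /eqP->].
split=> M0 r c rc; apply: M0.
  by apply/negP => /sameP e; rewrite e eqxx in rc.
by apply/eqP => /sameP e; rewrite e in rc.
Qed.

Lemma block_of_cast j (k : 'I_(ns j)) : block_of (cast_ord sum_ns (tagnat.Rank j k)) = j.
Proof. by rewrite /block_of cast_ordK tagnat.Rank1K. Qed.

Lemma block_diag_castmx (X : forall i j, 'M[R[i]]_(ns i, ns j)) :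
  (forall i j, i != j -> X i j = 0) ->
  block_diag ns (castmx (sum_ns, sum_ns) (\mxblock_(i, j) X i j)).
Proof. by move=> X0; apply/block_diagP => r c rc; rewrite castmxE mxE X0 ?mxE. Qed.

End BlockIndex.

Section Congruence.
Variables (R : realType) (m n t : nat).
Local Notation C := R[i].
Variables (A : 'I_m -> 'M[C]_n) (P : 'M[C]_n).
Hypothesis P_unit : P \in unitmx.

Lemma in_center_congr X :
  in_center (fun k => adjmx P *m A k *m P) X -> in_center A (P *m X *m invmx P).
Proof.
move=> hX k; have adjPV : adjmx (invmx P) *m adjmx P = 1%:M.
  by rewrite -adjmxM mulmxV // adjmx1.
have hermY : herm_mx (adjmx P *m A k *m P *m X) := hX k.
have -> : A k *m (P *m X *m invmx P) =
    adjmx (invmx P) *m (adjmx P *m A k *m P *m X) *m invmx P.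
  by rewrite !mulmxA adjPV mul1mx.
by rewrite adjmxM (adjmxM _ (adjmx P *m _ *m _ *m X)) hermY adjmxK mulmxA.
Qed.

Lemma orth_idem_set_congr (D : 'I_t -> 'M[C]_n) :
  orth_idem_set (fun k => adjmx P *m A k *m P) D ->
  orth_idem_set A (fun j => P *m D j *m invmx P).
Proof.
case=> D_neq0 D_center D_idem D_orth D_sum1.
have mulE j l : P *m D j *m invmx P *m (P *m D l *m invmx P) = P *m (D j *m D l) *m invmx P.
  by rewrite !mulmxA mulmxKV.
split=> [j|j|j|j l jl|].
- apply: contraNneq (D_neq0 j) => /(congr1 (fun M => invmx P *m M *m P)).
  by rewrite mulmx0 mul0mx !mulmxA mulVmx // mul1mx mulmxKV // => /eqP.
- exact: in_center_congr.
- by rewrite mulE D_idem.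
- by rewrite mulE D_orth // mulmx0 mul0mx.
- by rewrite -mulmx_suml -mulmx_sumr D_sum1 mulmx1 mulmxV.
Qed.

End Congruence.

Section BlockProjections.
Variables (R : realType) (t : nat) (ns : 'I_t -> nat) (n : nat).
Local Notation C := R[i].
Hypothesis sum_ns : (\sum_(j < t) ns j)%N = n.
Local Notation block_of := (block_of sum_ns).

Definition block_proj j : 'M[C]_n := diag_mx (\row_r (block_of r == j)%:R).

Lemma block_projE j r c : block_proj j r c = ((r == c) && (block_of r == j))%:R.
Proof. by rewrite !mxE; case: eqP; case: eqP. Qed.

Lemma adjmx_block_proj j : adjmx (block_proj j) = block_proj j.
Proof.
apply/matrixP => r c; rewrite /adjmx !mxE.
by have [->|_] := eqVneq c r; rewrite ?mulr1n ?conjC_nat // !mulr0n conjC0.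
Qed.

Lemma block_proj_idem j : block_proj j *m block_proj j = block_proj j.
Proof. by rewrite mulmx_diag; congr diag_mx; apply/rowP => r; rewrite !mxE -natrM mulnb andbb. Qed.

Lemma block_proj_orth j l : j != l -> block_proj j *m block_proj l = 0.
Proof.
move=> jl; rewrite mulmx_diag [X in diag_mx X](_ : _ = 0) ?linear0 //.
by apply/rowP => r; rewrite !mxE; case: eqP => [->|_]; rewrite ?(negbTE jl) ?mulr0 ?mul0r.
Qed.

Lemma block_proj_sum1 : \sum_j block_proj j = 1%:M.
Proof.
apply/matrixP => r c; rewrite summxE (bigD1 (block_of r)) //= big1 ?addr0.
  by rewrite block_projE eqxx andbT mxE.
by move=> j jr; rewrite block_projE [block_of r == j]eq_sym (negbTE jr) andbF.
Qed.

Lemma block_proj_neq0 j : (0 < ns j)%N -> block_proj j != 0.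
Proof.
move=> ns_gt0; set r := cast_ord sum_ns (tagnat.Rank j (Ordinal ns_gt0)).
apply/eqP => /matrixP/(_ r r); rewrite block_projE eqxx block_of_cast eqxx mxE.
by move/eqP; rewrite oner_eq0.
Qed.

Lemma block_diag_comm (M : 'M[C]_n) j :
  block_diag ns M -> M *m block_proj j = block_proj j *m M.
Proof.
move/block_diagP => M0; rewrite mul_mx_diag mul_diag_mx; apply/matrixP => r c; rewrite !mxE.
have [rc|/M0->] := eqVneq (block_of r) (block_of c); last by rewrite mul0r mulr0.
by rewrite rc mulrC.
Qed.

End BlockProjections.

Arguments block_proj {R t ns n} sum_ns j.

Lemma block_form_orth_idem (R : realType) m n t (A : 'I_m -> 'M[R[i]]_n)
    (P : 'M[R[i]]_n) (ns : 'I_t -> nat) (sum_ns : (\sum_(j < t) ns j)%N = n) :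
  (forall k, herm_mx (A k)) -> P \in unitmx -> (forall j, 0 < ns j)%N ->
  (forall k, block_diag ns (adjmx P *m A k *m P)) ->
  orth_idem_set A (fun j => P *m block_proj sum_ns j *m invmx P).
Proof.
move=> hermA P_unit ns_gt0 A_diag; apply: orth_idem_set_congr => //.
split=> [j|j k|j|j l|]; rewrite ?block_proj_neq0 ?block_proj_idem ?block_proj_sum1 //.
  by rewrite adjmxM herm_congr // adjmx_block_proj block_diag_comm.
exact: block_proj_orth.
Qed.

Lemma herm_block_proj_congr (R : realType) n t (ns : 'I_t -> nat)
    (sum_ns : (\sum_(j < t) ns j)%N = n) (U : 'M[R[i]]_n) j :
  unitary_mx U -> herm_mx (U *m block_proj sum_ns j *m invmx U).
Proof.
move=> U_unitary; have U_unit : U \in unitmx by case: (mulmx1_unit U_unitary).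
have -> : invmx U = adjmx U.
  by rewrite -[invmx U]mulmx1 -(mulmx1C U_unitary) mulmxA mulVmx ?mul1mx.
by rewrite -[X in X *m block_proj _ _]adjmxK; apply: herm_congr; apply: adjmx_block_proj.
Qed.



Section GramBasis.
Variables (R : realType) (n t : nat).
Local Notation C := R[i].
Variable eps : 'I_t -> 'M[C]_n.
Hypothesis eps_idem : forall j, eps j *m eps j = eps j.
Hypothesis eps_orth : forall j l, j != l -> eps j *m eps l = 0.
Hypothesis eps_sum1 : \sum_j eps j = 1%:M.

Definition gram_sizes j := \rank (adjmx (eps j)).

Lemma sum_gram_sizes : (\sum_j gram_sizes j)%N = n.
Proof.
apply: sum_mxrank_idem => [j|j l lj|]; rewrite -?adjmxM ?eps_idem //.
  by rewrite eps_orth 1?eq_sym // adjmx0.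
by rewrite -adjmx_sum eps_sum1 adjmx1.
Qed.

Lemma gram_sizes_gt0 j : eps j != 0 -> (0 < gram_sizes j)%N.
Proof.
by rewrite lt0n mxrank_eq0 adjmx_eq0.
Qed.

Definition gram_rows j : 'M[C]_(gram_sizes j, n) := schmidt (row_base (adjmx (eps j))).

Lemma gram_rows_eqmx j : (gram_rows j :=: adjmx (eps j))%MS.
Proof. exact: eqmx_trans (eqmx_schmidt_free (row_base_free _)) (eq_row_base _). Qed.

Lemma gram_rows_fix j : gram_rows j *m adjmx (eps j) = gram_rows j.
Proof.
have /submxP[X ->] : (gram_rows j <= adjmx (eps j))%MS by rewrite gram_rows_eqmx.
by rewrite -mulmxA -adjmxM eps_idem.
Qed.

Lemma gram_rows_cross B i j : adjmx (eps i) *m B = B *m eps i -> i != j ->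
  gram_rows i *m B *m adjmx (gram_rows j) = 0.
Proof.
move=> epsB ij; rewrite -gram_rows_fix -[gram_rows j]gram_rows_fix adjmxM adjmxK.
by rewrite -!mulmxA (mulmxA _ B) epsB -mulmxA (mulmxA (eps i)) eps_orth // mul0mx !mulmx0.
Qed.

(* The rows of block j span the row space of eps_j^*, so the corresponding columns of
   [adjmx gram_mx] form a basis of the image of eps_j. *)
Definition gram_mx : 'M[C]_n := castmx (sum_gram_sizes, erefl) (\mxcol_j gram_rows j).

Lemma gram_mx_unit : gram_mx \in unitmx.
Proof.
rewrite -row_full_unit row_full_castmx -sub1mx -adjmx1 -eps_sum1 adjmx_sum.
apply: summx_sub => j _; rewrite -gram_rows_eqmx.
by rewrite -[gram_rows j](@mxcolK _ _ _ _ gram_rows j) rowsub_sub.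
Qed.

Lemma gram_mx_sandwich B :
  gram_mx *m B *m adjmx gram_mx =
  castmx (sum_gram_sizes, sum_gram_sizes)
    (\mxblock_(i, j) (gram_rows i *m B *m adjmx (gram_rows j))).
Proof. by rewrite adjmx_castmx adjmx_mxcol mulmx_castmx mxcol_mul mul_mxcol_mxrow. Qed.

Lemma gram_mx_block_diag B : (forall j, adjmx (eps j) *m B = B *m eps j) ->
  block_diag gram_sizes (gram_mx *m B *m adjmx gram_mx).
Proof.
move=> epsB; rewrite gram_mx_sandwich.
by apply: block_diag_castmx => i j; apply: gram_rows_cross.
Qed.

Lemma gram_mx_unitary : (forall j, herm_mx (eps j)) -> gram_mx *m adjmx gram_mx = 1%:M.
Proof.
move=> herm_eps; rewrite -{1}(mulmx1 gram_mx) gram_mx_sandwich.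
have -> : \mxblock_(i, j) (gram_rows i *m 1%:M *m adjmx (gram_rows j)) = \mxdiag_i 1%:M.
  apply/eq_mxblockP => i j; have [<-|ij] := eqVneq i j.
    by rewrite conform_mx_id mulmx1 adjmxE; apply/unitarymxP/schmidt_unitarymx/rank_leq_col.
  by rewrite gram_rows_cross // mulmx1 mul1mx herm_eps.
by rewrite mxdiagZ castmx1.
Qed.

End GramBasis.

Section Center.
Variables (R : realType) (m n t : nat).
Local Notation C := R[i].
Variable A : 'I_m -> 'M[C]_n.
Hypothesis hermA : forall k, herm_mx (A k).

Lemma in_centerE X : in_center A X <-> forall k, adjmx X *m A k = A k *m X.
Proof. by split=> hX k; have := hX k; rewrite /herm_mx adjmxM hermA. Qed.

Lemma block_decomp_orth_idem V (eps : 'I_t -> 'M[C]_n) :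
  block_decomp A V -> proj_family V eps -> orth_idem_set A eps.
Proof.
case=> V_neq0 _ sumV orthA peps; split.
- by move=> j; apply: (proj_family_neq0 peps).
- move=> j; apply (in_centerE (eps j)).2 => k.
  by apply/(form_orthE sumV peps): j; apply: orthA.
- exact: (proj_family_idem sumV peps).
- exact: (proj_family_orth sumV peps).
- exact: (proj_family_sum1 sumV peps).
Qed.

Lemma orth_idem_block_decomp (eps : 'I_t -> 'M[C]_n) : orth_idem_set A eps ->
  block_decomp A (image_family eps) /\ proj_family (image_family eps) eps.
Proof.
case=> eps_neq0 eps_center eps_idem eps_orth eps_sum1.
have peps := image_family_proj eps_idem eps_orth.
have sumV := image_family_sum eps_idem eps_sum1.
split=> //; split=> [j||//|k].
- exact: image_family_neq0.
- exact: image_family_direct.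
- by apply/(form_orthE sumV peps) => j; apply: (in_centerE _).1.
Qed.

Lemma orth_family_herm V (eps : 'I_t -> 'M[C]_n) :
  (\sum_(j < t) V j)%VS = fullv -> proj_family V eps ->
  orth_family V <-> forall j, herm_mx (eps j).
Proof.
move=> sumV peps; rewrite orth_familyE (form_orthE sumV peps).
by split=> h j; have := h j; rewrite mulmx1 mul1mx.
Qed.

Lemma orth_idem_block_form (eps : 'I_t -> 'M[C]_n) : orth_idem_set A eps ->
  exists (P : 'M[C]_n) (ns : 'I_t -> nat),
    [/\ P \in unitmx, (forall j, 0 < ns j)%N, (\sum_(j < t) ns j)%N = n,
        forall k, block_diag ns (adjmx P *m A k *m P) &
        (forall j, herm_mx (eps j)) -> unitary_mx P].
Proof.
case=> eps_neq0 eps_center eps_idem eps_orth eps_sum1.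
exists (adjmx (gram_mx eps_idem eps_orth eps_sum1)), (gram_sizes eps); split.
- exact/adjmx_unit/gram_mx_unit.
- by move=> j; apply: gram_sizes_gt0.
- exact: sum_gram_sizes.
- by move=> k; rewrite adjmxK; apply: gram_mx_block_diag => j; apply: (in_centerE _).1.
- by move=> herm_eps; rewrite /unitary_mx adjmxK; apply: gram_mx_unitary.
Qed.

End Center.

Theorem mainTheorem7 (R : realType) (m n t : nat) (A : 'I_m -> 'M[R[i]]_n)
  (hA : forall k, herm_mx (A k)) (ht : (0 < t)%N) :
  [/\ (forall V : 'I_t -> {vspace 'cV[R[i]]_n}, block_decomp A V -> exists! eps : 'I_t -> 'M[R[i]]_n, proj_family V eps),
      (forall (V : 'I_t -> {vspace 'cV[R[i]]_n}) (eps : 'I_t -> 'M[R[i]]_n), block_decomp A V -> proj_family V eps -> orth_idem_set A eps),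
      (forall (V V' : 'I_t -> {vspace 'cV[R[i]]_n}) (eps : 'I_t -> 'M[R[i]]_n), block_decomp A V -> block_decomp A V' ->
         proj_family V eps -> proj_family V' eps -> V = V'),
      (forall eps : 'I_t -> 'M[R[i]]_n, orth_idem_set A eps ->
         exists V : 'I_t -> {vspace 'cV[R[i]]_n}, block_decomp A V /\ proj_family V eps) &
      ((exists (P : 'M[R[i]]_n) (ns : 'I_t -> nat),
          [/\ P \in unitmx, (forall j, 0 < ns j)%N, (\sum_(j < t) ns j)%N = n &
              forall k, block_diag ns (adjmx P *m A k *m P)])
       <-> exists eps : 'I_t -> 'M[R[i]]_n, orth_idem_set A eps)]
  /\
  [/\ (forall (V : 'I_t -> {vspace 'cV[R[i]]_n}) (eps : 'I_t -> 'M[R[i]]_n), block_decomp A V -> orth_family V -> proj_family V eps ->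
         orth_idem_set A eps /\ forall j, herm_mx (eps j)),
      (forall (V V' : 'I_t -> {vspace 'cV[R[i]]_n}) (eps : 'I_t -> 'M[R[i]]_n), block_decomp A V -> orth_family V ->
         block_decomp A V' -> orth_family V' ->
         proj_family V eps -> proj_family V' eps -> V = V'),
      (forall eps : 'I_t -> 'M[R[i]]_n, orth_idem_set A eps -> (forall j, herm_mx (eps j)) ->
         exists V : 'I_t -> {vspace 'cV[R[i]]_n}, [/\ block_decomp A V, orth_family V & proj_family V eps]) &
      ((exists (U : 'M[R[i]]_n) (ns : 'I_t -> nat),
          [/\ unitary_mx U, (forall j, 0 < ns j)%N, (\sum_(j < t) ns j)%N = n &
              forall k, block_diag ns (adjmx U *m A k *m U)])
       <-> exists eps : 'I_t -> 'M[R[i]]_n, orth_idem_set A eps /\ forall j, herm_mx (eps j))].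
Proof.
split; split.
- move=> V [_ dxV sumV _]; have [eps peps] := proj_family_exists sumV dxV.
  by exists eps; split=> // eps'; apply: proj_family_unique.
- exact: block_decomp_orth_idem.
- by move=> V V' eps [_ _ sumV _] [_ _ sumV' _]; apply: proj_family_inj.
- by move=> eps /(orth_idem_block_decomp hA) decomp; exists (image_family eps).
- split=> [[P [ns [P_unit ns_gt0 sum_ns A_diag]]]
          | [eps /(orth_idem_block_form hA)]].
    by exists (fun j => P *m block_proj sum_ns j *m invmx P); apply: block_form_orth_idem.
  by case=> P [ns [P_unit ns_gt0 sum_ns A_diag _]]; exists P, ns.
- move=> V eps decompV orthV peps; split; first exact: block_decomp_orth_idem decompV peps.
  by case: decompV => _ _ sumV _; apply/(orth_family_herm sumV peps).
- by move=> V V' eps [_ _ sumV _] _ [_ _ sumV' _] _; apply: proj_family_inj.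
- move=> eps idem_eps herm_eps; have [decomp peps] := orth_idem_block_decomp hA idem_eps.
  exists (image_family eps); split=> //.
  by case: decomp => _ _ sumV _; apply/(orth_family_herm sumV peps).
- split=> [[U [ns [U_unitary ns_gt0 sum_ns A_diag]]]
          | [eps [/(orth_idem_block_form hA) form herm_eps]]].
    have U_unit : U \in unitmx by case: (mulmx1_unit U_unitary).
    exists (fun j => U *m block_proj sum_ns j *m invmx U); split.
      exact: block_form_orth_idem.
    by move=> j; apply: herm_block_proj_congr.
  by have [P [ns [_ ns_gt0 sum_ns A_diag /(_ herm_eps)]]] := form; exists P, ns.
Qed.
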